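(* Let $G$ be a finite simple graph that contains no subgraph isomorphic to $C_n$ for any $n\ge 4$ with $n\not\equiv 0\pmod 4$. Let $u\in V(G)$ and, for $i\ge 1$, let $N_i=\{v\in V(G) : d(u,v)=i\}$. Let $i\ge 1$ and $a,b\in N_i$. If $ab$ is not an edge of any subgraph of $G$ isomorphic to $K_3$, then $ab\notin E(G)$.
   Context: $d(u,v)$ is the shortest-path distance in $G$; $C_n$ is the cycle on $n$ vertices; subgraphs need not be induced. *)

From mathcomp Require Import all_boot.
Set Implicit Arguments. Unset Strict Implicit. Unset Printing Implicit Defensive.

Definition simple_graph (T : finType) (e : rel T) : Prop :=
  symmetric e /\ irreflexive e.

(* G contains a (not necessarily induced) subgraph isomorphic to C_n:
   n pairwise distinct vertices v_0,...,v_{n-1} with v_j v_{j+1 mod n} edges. *)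
Definition has_Cn_subgraph (T : finType) (e : rel T) (n : nat) : Prop :=
  exists s : seq T, [/\ size s = n, uniq s & cycle e s].

Definition walk_of_length (T : finType) (e : rel T) (u v : T) (k : nat) : Prop :=
  exists p : seq T, [/\ size p = k, path e u p & last u p = v].

Definition dist_eq (T : finType) (e : rel T) (u v : T) (i : nat) : Prop :=
  walk_of_length e u v i /\ forall k, k < i -> ~ walk_of_length e u v k.

Definition in_layer (T : finType) (e : rel T) (u : T) (i : nat) (v : T) : Prop :=
  dist_eq e u v i.

Definition edge_in_triangle (T : finType) (e : rel T) (a b : T) : Prop :=
  [/\ a != b, e a b & exists c, [/\ c != a, c != b, e a c & e b c]].

(* Take shortest walks A and B from u to a and to b, and let j be the last
   index at which they meet.  Their tails after j together with the edge ab
   form a closed walk of odd length 2(i - j) + 1, which is a genuine cycle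
   because the index along a shortest walk is the distance from u.  For
   i - j = 1 this cycle is a triangle on ab; otherwise it is an odd cycle of
   length at least 5, whose length is not divisible by 4. *)

From mathcomp Require Import all_boot zify.

Set Implicit Arguments.
Unset Strict Implicit.
Unset Printing Implicit Defensive.

Lemma mkseqSl (T : Type) (f : nat -> T) n :
  mkseq f n.+1 = f 0 :: mkseq (f \o succn) n.
Proof. by rewrite /mkseq /= -[1]/(1 + 0) iotaDl -map_comp. Qed.

Section WalksAsFunctions.

Variables (T : finType) (e : rel T).

Definition is_walk (f : nat -> T) (n : nat) : Prop :=
  forall k, k < n -> e (f k) (f k.+1).

Lemma is_walk_prefix f n k : is_walk f n -> k <= n -> is_walk f k.
Proof. by move=> wf kn t tk; apply: wf; apply: leq_trans kn. Qed.

Lemma is_walk_shift f n k :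
  is_walk f n -> k <= n -> is_walk (fun t => f (k + t)) (n - k).
Proof. by move=> wf kn t tnk; rewrite addnS; apply: wf; lia. Qed.

Lemma path_mkseq f n : is_walk f n -> path e (f 0) (mkseq (f \o succn) n).
Proof.
move=> wf; apply/(pathP (f 0)) => k; rewrite size_mkseq => kn.
rewrite nth_mkseq //; case: k kn => [|k] kn /=; first exact: wf.
by rewrite nth_mkseq ?(ltnW kn) //; apply: wf.
Qed.

Lemma walk_of_length_fun f n : is_walk f n -> walk_of_length e (f 0) (f n) n.
Proof.
move=> wf; exists (mkseq (f \o succn) n); split; first exact: size_mkseq.
- exact: path_mkseq.
- by case: n wf => [|n] _ //; rewrite mkseqS last_rcons.
Qed.

Lemma walk_of_lengthP u v n :
  walk_of_length e u v n ->
  exists f, [/\ f 0 = u, f n = v & is_walk f n].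
Proof.
move=> [p [<- pp <-]]; exists (nth u (u :: p)); split=> //.
- by rewrite -last_nth.
- by move=> k kp; apply: (pathP u pp).
Qed.

Lemma walk_of_length_cat u v w k m :
  walk_of_length e u v k -> walk_of_length e v w m ->
  walk_of_length e u w (k + m).
Proof.
move=> [p [<- pp lp]] [q [<- pq lq]]; exists (p ++ q).
by rewrite size_cat cat_path last_cat lp pp pq lq.
Qed.

Lemma dist_eq_uniq u v k l : dist_eq e u v k -> dist_eq e u v l -> k = l.
Proof.
move=> [wk mk] [wl ml].
by case: (ltngtP k l) => // lt; [case: (ml _ lt wk) | case: (mk _ lt wl)].
Qed.

Lemma dist_eq_geodesic f n k :
  is_walk f n -> dist_eq e (f 0) (f n) n -> k <= n -> dist_eq e (f 0) (f k) k.
Proof.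
move=> wf [_ min_n] kn; split.
  exact: walk_of_length_fun (is_walk_prefix wf kn).
move=> l lk wl; apply: (min_n (l + (n - k))); first lia.
apply: walk_of_length_cat wl _.
by have := walk_of_length_fun (is_walk_shift wf kn); rewrite addn0 subnKC.
Qed.

Lemma has_Cn_subgraph_fun c n :
  is_walk c n.+1 -> c n.+1 = c 0 -> {in gtn n.+1 &, injective c} ->
  has_Cn_subgraph e n.+1.
Proof.
move=> wc closed injc; exists (mkseq c n.+1); split.
- exact: size_mkseq.
- exact/mkseq_uniqP.
- rewrite mkseqSl /= -[X in rcons _ X]closed -[c n.+1]/((c \o succn) n) -mkseqS.
  exact: path_mkseq.
Qed.

End WalksAsFunctions.

Lemma last_meeting (T : eqType) (A B : nat -> T) i :
  A 0 = B 0 -> A i != B i ->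
  exists j, [/\ j < i, A j = B j & forall k, j < k <= i -> A k != B k].
Proof.
move=> AB0 neqAB.
pose P k := (k < i) && (A k == B k).
have i_gt0 : 0 < i by rewrite lt0n; apply: contraNneq neqAB => ->; rewrite AB0.
have P0 : exists k, P k by exists 0; rewrite /P AB0 eqxx andbT.
have Pbound k : P k -> k <= i by case/andP=> /ltnW.
case: (ex_maxnP P0 Pbound) => j /andP[ji /eqP ABj] maxj.
exists j; split=> // k /andP[jk ki]; apply/negP=> /eqP ABk.
have [ki'|ki'] := ltnP k i.
- have /maxj kj : P k by rewrite /P ki' ABk eqxx.
  lia.
- have ki_eq : k = i by lia.
  by move: neqAB; rewrite -ki_eq ABk eqxx.
Qed.

Section TwoGeodesics.

Variables (T : finType) (e : rel T) (u : T) (i : nat) (A B : nat -> T).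

Hypotheses (sym_e : symmetric e) (A0 : A 0 = u) (B0 : B 0 = u).
Hypotheses (walkA : is_walk e A i) (walkB : is_walk e B i).
Hypotheses (distA : dist_eq e u (A i) i) (distB : dist_eq e u (B i) i).

Lemma dist_eqA k : k <= i -> dist_eq e u (A k) k.
Proof. by rewrite -A0; apply: dist_eq_geodesic; rewrite ?A0. Qed.

Lemma dist_eqB k : k <= i -> dist_eq e u (B k) k.
Proof. by rewrite -B0; apply: dist_eq_geodesic; rewrite ?B0. Qed.

Lemma A_inj k l : k <= i -> l <= i -> A k = A l -> k = l.
Proof.
move=> ki li E; apply: dist_eq_uniq (dist_eqA ki) _.
by rewrite E; apply: dist_eqA.
Qed.

Lemma B_inj k l : k <= i -> l <= i -> B k = B l -> k = l.
Proof.
move=> ki li E; apply: dist_eq_uniq (dist_eqB ki) _.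
by rewrite E; apply: dist_eqB.
Qed.

Lemma AB_index k l : k <= i -> l <= i -> A k = B l -> k = l.
Proof.
move=> ki li E; apply: dist_eq_uniq (dist_eqA ki) _.
by rewrite E; apply: dist_eqB.
Qed.

Section ClosingCycle.

Variable j : nat.
Hypotheses (ji : j < i) (ABj : A j = B j).
Hypothesis apart : forall k, j < k <= i -> A k != B k.

Let m := i - j.
(* [c] follows A from A j to A i, then B backwards from B i to B j = A j. *)
Let c t := if t <= m then A (j + t) else B (i + m.+1 - t).

Lemma closing_walk : e (A i) (B i) -> is_walk e c m.*2.+1.
Proof.
move=> eAB; have jm : j + m = i by rewrite subnKC // ltnW.
move=> k km; rewrite /c; case: ifP => km1; case: ifP => km2.
- by rewrite addnS; apply: walkA; lia.
- have -> : k = m by lia.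
  by rewrite addnK jm.
- lia.
- rewrite sym_e addnS subSS (_ : (i + m).+1 - k = (i + m - k).+1); last lia.
  by apply: walkB; lia.
Qed.

Lemma closing_walk_inj : {in gtn m.*2.+1 &, injective c}.
Proof.
have apartAB k l : k <= i -> j < l <= i -> A k != B l.
  move=> ki jli; have /andP[_ li] := jli.
  by apply: contraNneq _ (apart jli) => E; rewrite -{1}(AB_index ki li E) E.
move=> t t'; rewrite !inE /c => tm t'm.
case: ifP => t1; case: ifP => t'1 E.
- by have := A_inj _ _ E; lia.
- by have := apartAB (j + t) (i + m.+1 - t'); rewrite E eqxx; lia.
- by have := apartAB (j + t') (i + m.+1 - t); rewrite E eqxx; lia.
- by have := B_inj _ _ E; lia.
Qed.

Lemma odd_cycle_of_last_meeting : e (A i) (B i) -> has_Cn_subgraph e m.*2.+1.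
Proof.
move=> eAB; apply: has_Cn_subgraph_fun (closing_walk eAB) _ closing_walk_inj.
have jm : j + m = i by rewrite subnKC // ltnW.
rewrite /c leq0n addn0 ifN; last lia.
by rewrite ABj; congr B; lia.
Qed.

End ClosingCycle.

Lemma triangle_of_last_meeting j :
  A i != B i -> e (A i) (B i) -> j.+1 = i -> A j = B j ->
  edge_in_triangle e (A i) (B i).
Proof.
move=> neqAB eAB ji ABj; split=> //; exists (A j); split.
- by apply/eqP => /A_inj; lia.
- by apply/eqP; rewrite ABj => /B_inj; lia.
- by rewrite sym_e -ji; apply: walkA; rewrite -ji.
- by rewrite ABj sym_e -ji; apply: walkB; rewrite -ji.
Qed.

End TwoGeodesics.

Theorem mainTheorem8 (T : finType) (e : rel T) :
  simple_graph e ->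
  (forall n, 4 <= n -> n %% 4 != 0 -> ~ has_Cn_subgraph e n) ->
  forall (u : T) (i : nat) (a b : T),
    1 <= i -> in_layer e u i a -> in_layer e u i b ->
    ~ edge_in_triangle e a b ->
    ~~ e a b.
Proof.
move=> [sym_e irr_e] noCn u i a b _ dist_a dist_b no_triangle.
apply/negP => eab.
have neq_ab : a != b by apply: contraTneq eab => ->; rewrite irr_e.
have [A [A0 Ai walkA]] := walk_of_lengthP dist_a.1.
have [B [B0 Bi walkB]] := walk_of_lengthP dist_b.1.
rewrite -Ai -Bi in dist_a dist_b neq_ab eab no_triangle.
have [j [ji ABj apart]] := last_meeting (etrans A0 (esym B0)) neq_ab.
have [ij|ij] := eqVneq j.+1 i.
- exact/no_triangle/(triangle_of_last_meeting sym_e A0 B0 walkA walkB dist_a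
                        dist_b neq_ab eab ij ABj).
- move: (odd_cycle_of_last_meeting sym_e A0 B0 walkA walkB dist_a dist_b
          ji ABj apart eab).
  by apply: noCn; lia.
Qed.
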